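(* Let $\Gamma$ be a simple, undirected, connected graph with $p\ge 2$ vertices, minimum degree $\delta(\Gamma)\ge 2$, maximum degree $\Delta(\Gamma)$ and girth at least $5$. Then $\gamma_{[3R]}(\Gamma)\le 2p-2\Delta(\Gamma)+1$.
   Context: The girth of a graph is the minimum length of a cycle in it. For a graph $\Gamma=(V,E)$ and $h:V\to\{0,1,2,3,4\}$, let $AN(v)=\{w\in N(v):h(w)\ge 1\}$, $AN[v]=AN(v)\cup\{v\}$ and $h(S)=\sum_{u\in S}h(u)$. $h$ is a triple Roman dominating function (3RDF) if every $v$ with $h(v)<3$ satisfies $h(AN[v])\ge|AN(v)|+3$. The triple Roman domination number $\gamma_{[3R]}(\Gamma)$ is the minimum weight $h(V)$ of a 3RDF of $\Gamma$. *)

From mathcomp Require Import all_boot all_order.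
Set Implicit Arguments. Unset Strict Implicit. Unset Printing Implicit Defensive.

Definition simple_graph (T : finType) (g : rel T) : Prop :=
  symmetric g /\ irreflexive g.

Definition connected_graph (T : finType) (g : rel T) : Prop :=
  forall x y : T, connect g x y.

Definition nbhd (T : finType) (g : rel T) (v : T) : {set T} := [set w | g v w].
Definition deg (T : finType) (g : rel T) (v : T) : nat := #|nbhd g v|.
Definition max_deg (T : finType) (g : rel T) : nat := \max_(v : T) deg g v.
Definition min_deg_ge (T : finType) (g : rel T) (k : nat) : Prop :=
  forall v : T, k <= deg g v.

(* girth >= k: every cycle (sequence of >= 3 distinct vertices, consecutive ones
   adjacent, last adjacent to first) has length >= k. Acyclic graphs have
   infinite girth and satisfy this vacuously. *)
Definition girth_ge (T : finType) (g : rel T) (k : nat) : Prop :=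
  forall s : seq T, uniq s -> 3 <= size s -> cycle g s -> k <= size s.

Definition active_nbhd (T : finType) (g : rel T) (h : {ffun T -> 'I_5}) (v : T) : {set T} :=
  [set w | g v w & 1 <= h w].

Definition weight (T : finType) (h : {ffun T -> 'I_5}) (S : {set T}) : nat :=
  \sum_(u in S) (h u : nat).

Definition is3RDF (T : finType) (g : rel T) (h : {ffun T -> 'I_5}) : bool :=
  [forall v : T, (h v < 3) ==>
     (#|active_nbhd g h v| + 3 <= weight h (v |: active_nbhd g h v))].

Definition all4 (T : finType) : {ffun T -> 'I_5} := [ffun _ => (inord 4 : 'I_5)].

(* gamma_[3R] = minimum of h(V) over all 3RDFs h (the constant-4 function is a
   3RDF, so its weight 4|V| is a valid starting value for the minimum). *)
Definition gamma3R (T : finType) (g : rel T) : nat :=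
  \big[minn/weight (all4 T) [set: T]]_(h : {ffun T -> 'I_5} | is3RDF g h)
     weight h [set: T].

From mathcomp Require Import all_boot all_order.
From mathcomp Require Import zify.

Set Implicit Arguments.
Unset Strict Implicit.
Unset Printing Implicit Defensive.

(* Take a vertex v of maximum degree and put h(v) = 3, h = 0 on N(v) and h = 2
   on the remaining p - 1 - Delta vertices; the weight is 2p - 2 Delta + 1.
   Since girth >= 5 and delta >= 2, every vertex x != v has a neighbour outside
   N[v] (for x in N(v) by triangle-freeness, otherwise because x and v have at
   most one common neighbour), whose value 2 -- together with the value 3 of v
   when x in N(v) -- supplies the three units of excess a vertex of value < 3
   needs. *)

Lemma gamma3R_le (T : finType) (g : rel T) (h : {ffun T -> 'I_5}) :
  is3RDF g h -> gamma3R g <= weight h [set: T].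
Proof.
move=> h3; rewrite /gamma3R -minEnat -leEnat.
exact: (Order.TotalTheory.bigmin_le_cond _ (fun h => weight h [set: T]) h3).
Qed.

Lemma leq_sum_pair (I : finType) (A : {pred I}) (F : I -> nat) a b :
  a \in A -> b \in A -> a != b -> F a + F b <= \sum_(i in A) F i.
Proof.
move=> aA bA ab; rewrite (bigD1 a) //= leq_add2l (bigD1 b) ?bA 1?eq_sym //=.
exact: leq_addr.
Qed.

Section TripleRomanExcess.

Variables (T : finType) (g : rel T).
Hypothesis girr : irreflexive g.

(* Each active neighbour contributes 1 to the right-hand side of the 3RDF
   condition, so only the excesses (h w).-1 matter. *)
Lemma is3RDFP (h : {ffun T -> 'I_5}) :
  reflect (forall v, h v < 3 ->
             3 <= h v + \sum_(w in active_nbhd g h v) (h w).-1)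
          (is3RDF g h).
Proof.
have weightE v : weight h (v |: active_nbhd g h v)
    = #|active_nbhd g h v| + (h v + \sum_(w in active_nbhd g h v) (h w).-1).
  rewrite /weight big_setU1 ?inE ?girr //= addnCA -sum1_card -big_split /=.
  by congr (_ + _); apply: eq_bigr => w; rewrite inE => /andP[_]; lia.
apply: (iffP forallP) => h3 v.
  by have /implyP := h3 v; rewrite weightE leq_add2l.
by apply/implyP; rewrite weightE leq_add2l; apply: h3.
Qed.

End TripleRomanExcess.

Section Girth5.

Variables (T : finType) (g : rel T).
Hypotheses (gsym : symmetric g) (girr : irreflexive g) (gir : girth_ge g 5).
Hypothesis mdeg : min_deg_ge g 2.

Lemma adj_neq x y : g x y -> x != y.
Proof. by apply: contraTneq => ->; rewrite girr. Qed.

Lemma girth5_triangle_free x y z : g x y -> g y z -> ~~ g x z.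
Proof.
move=> xy yz; apply/negP => xz.
have := gir (s := [:: x; y; z]); rewrite /= xy yz gsym xz !inE negb_or.
by rewrite !adj_neq // => /(_ isT isT isT).
Qed.

Lemma girth5_common_nbr_uniq x y a b :
  x != y -> g x a -> g a y -> g x b -> g b y -> a = b.
Proof.
move=> xy xa ay xb gby; apply/eqP/negPn/negP => ab.
have := gir (s := [:: x; a; y; b]); rewrite /= xa ay (gsym y) gby (gsym b) xb.
by rewrite !inE !negb_or xy ab !adj_neq // 1?gsym // => /(_ isT isT isT).
Qed.

Lemma exists_other_nbr x u : exists2 w, g x w & w != u.
Proof.
have := mdeg x; rewrite /deg => /card_gt1P[a [b [+ + ab]]].
rewrite !inE => xa xb.
by case: (eqVneq a u) => [au|]; [exists b; rewrite // -au eq_sym | exists a].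
Qed.

Lemma exists_nbr_notin_closed_nbhd v x : x != v ->
  exists2 w, g x w & w \notin v |: nbhd g v.
Proof.
move=> xv; rewrite /nbhd.
have [vx | vNx] := boolP (g v x).
  have [w xw wv] := exists_other_nbr x v.
  by exists w; rewrite // !inE negb_or wv (girth5_triangle_free vx xw).
have [a xa _] := exists_other_nbr x x.
have [va | vNa] := boolP (g v a); last first.
  exists a; rewrite // !inE negb_or vNa andbT.
  by apply: contraNneq vNx => <-; rewrite gsym.
have [w xw wa] := exists_other_nbr x a.
exists w; rewrite // !inE negb_or; apply/andP; split.
  by apply: contraNneq vNx => <-; rewrite gsym.
apply: contra wa => vw; apply/eqP.
by apply: (girth5_common_nbr_uniq (y := x) _ vw _ va); rewrite 1?eq_sym 1?gsym.
Qed.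

End Girth5.

Section StarRDF.

Variables (T : finType) (g : rel T) (v : T).
Hypotheses (gsym : symmetric g) (girr : irreflexive g).

Definition star_rdf : {ffun T -> 'I_5} :=
  [ffun x => inord (if x == v then 3 else if g v x then 0 else 2)].

Lemma star_rdfE x :
  star_rdf x = (if x == v then 3 else if g v x then 0 else 2) :> nat.
Proof. by rewrite ffunE inordK //; case: (x == v); case: (g v x). Qed.

Lemma weight_star_rdf : weight star_rdf [set: T] = 2 * #|T| - 2 * deg g v + 1.
Proof.
pose W := ~: (v |: nbhd g v).
have cardW : #|W| + (1 + deg g v) = #|T|.
  by rewrite -(cardsC (v |: nbhd g v)) cardsU1 inE girr addnC.
suff -> : weight star_rdf [set: T] = 3 + 2 * #|W| by lia.
rewrite /weight (bigD1 v) //= star_rdfE eqxx; congr (_ + _).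
rewrite mulnC -sum_nat_const big_mkcond [RHS]big_mkcond /=.
apply: eq_bigr => x _; rewrite star_rdfE !inE negb_or.
by case: eqVneq => //= _; case: (g v x).
Qed.

Lemma star_rdf_is3RDF : girth_ge g 5 -> min_deg_ge g 2 -> is3RDF g star_rdf.
Proof.
move=> gir mdeg; apply/is3RDFP => // x; rewrite star_rdfE.
have [//|xv] := eqVneq x v.
have [w xw] := exists_nbr_notin_closed_nbhd gsym girr gir mdeg xv.
rewrite !inE negb_or => /andP[wv vNw].
have w_active : w \in active_nbhd g star_rdf x.
  by rewrite !inE xw star_rdfE (negbTE wv) (negbTE vNw).
have hw : (star_rdf w).-1 = 1 by rewrite star_rdfE (negbTE wv) (negbTE vNw).
case: ifP => vx _; last first.
  by rewrite (bigD1 w) //= hw addnA leq_addr.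
have v_active : v \in active_nbhd g star_rdf x.
  by rewrite !inE gsym vx star_rdfE eqxx.
have vw : v != w by rewrite eq_sym.
have := leq_sum_pair (fun u => (star_rdf u).-1) v_active w_active vw.
by rewrite hw star_rdfE eqxx.
Qed.

End StarRDF.

Theorem proposition9 (T : finType) (g : rel T) :
  simple_graph g -> connected_graph g -> 2 <= #|T| ->
  min_deg_ge g 2 -> girth_ge g 5 ->
  gamma3R g <= 2 * #|T| - 2 * max_deg g + 1.
Proof.
move=> [gsym girr] _ cardT mdeg gir.
have [v maxv] := eq_bigmax (deg g) (ltnW cardT).
rewrite /max_deg maxv -weight_star_rdf //.
exact/gamma3R_le/star_rdf_is3RDF.
Qed.
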